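(* Let $Q$ be a quiver with no oriented cycles, $\theta\in\mathbb{Z}^{Q_0}$ a weight with $\nabla(Q,\theta)\ne\emptyset$, and $a\in Q_1$ an arrow such that the quiver $\hat Q$ obtained by contracting $a$ has no oriented cycles. Then for all sufficiently large integers $d$ the arrow $a$ is contractable for the pair $(Q,\theta+d(\varepsilon_{a^+}-\varepsilon_{a^-}))$, where $\varepsilon_v\in\mathbb{Z}^{Q_0}$ is the characteristic function of the vertex $v$.
   Context: A quiver $Q$: vertices $Q_0$, arrows $Q_1$, $a$ from $a^-$ to $a^+$. $\nabla(Q,\theta)=\{x\in\mathbb{R}_{\ge0}^{Q_1}\mid\forall v:\ \theta(v)=\sum_{a^+=v}x(a)-\sum_{a^-=v}x(a)\}$. Contracting a non-loop arrow $a$ of $(Q,\psi)$ gives $(\hat Q,\hat\psi)$: delete $a$, glue $a^-$ and $a^+$ to one vertex $v$, $\hat\psi(v)=\psi(a^-)+\psi(a^+)$, $\hat\psi=\psi$ elsewhere. The arrow $a$ is contractable for $(Q,\psi)$ if $\nabla(Q,\psi)$ and $\nabla(\hat Q,\hat\psi)$ are integral-affinely equivalent: there is an affine isomorphism between their affine spans mapping lattice points of one span (lattices $\mathbb{Z}^{Q_1}$, $\mathbb{Z}^{\hat Q_1}$) onto lattice points of the other and one polyhedron onto the other. *)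

From HB Require Import structures.
From mathcomp Require Import all_boot all_order all_algebra.
From mathcomp Require Import reals.
Set Implicit Arguments. Unset Strict Implicit. Unset Printing Implicit Defensive.
Import Order.TTheory GRing.Theory Num.Theory.
Local Open Scope ring_scope.

(* A finite quiver: vertex set qV, arrow set qA, arrow b goes from qs b (= b^-)
   to qt b (= b^+). *)
Record quiver := Quiver {
  qV : finType; qA : finType; qs : qA -> qV; qt : qA -> qV }.

Definition acyclic (Q : quiver) : Prop :=
  ~ exists (b : qA Q) (p : seq (qA Q)),
      path (fun x y => qt x == qs y) b p && (qt (last b p) == qs b).

Definition nabla (R : realType) (Q : quiver) (theta : qV Q -> int)
    (x : {ffun qA Q -> R}) : Prop :=
  (forall b, 0 <= x b) /\
  forall v, (theta v)%:~R
            = \sum_(b | qt b == v) x b - \sum_(b | qs b == v) x b.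

Definition aff_span (R : realType) (A : finType) (S : {ffun A -> R} -> Prop)
    (x : {ffun A -> R}) : Prop :=
  exists n (c : 'I_n -> R) (p : 'I_n -> {ffun A -> R}),
    (forall i, S (p i)) /\ \sum_i c i = 1 /\ forall b, x b = \sum_i c i * p i b.

Definition lattice_pt (R : realType) (A : finType) (x : {ffun A -> R}) : Prop :=
  forall b, x b \is a Num.int.

Definition affine_map (R : realType) (A B : finType)
    (f : {ffun A -> R} -> {ffun B -> R}) : Prop :=
  exists (L : {ffun A -> R} -> {ffun B -> R}) (c : {ffun B -> R}),
    (forall k (x y : {ffun A -> R}), L [ffun b => k * x b + y b]
                   = [ffun b' => k * L x b' + L y b']) /\
    forall x b', f x b' = L x b' + c b'.

(* Integral-affine equivalence of P in R^A and P' in R^B: an affine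
   isomorphism between the affine spans (restriction of an affine map of the
   ambient spaces), mapping lattice points of one span onto lattice points of
   the other, and P onto P'. *)
Definition int_aff_equiv (R : realType) (A B : finType)
    (P : {ffun A -> R} -> Prop) (P' : {ffun B -> R} -> Prop) : Prop :=
  exists f : {ffun A -> R} -> {ffun B -> R},
    affine_map f /\
    [/\ (forall x, aff_span P x -> aff_span P' (f x)),
        (forall x y, aff_span P x -> aff_span P y -> f x = f y -> x = y),
        (forall y, aff_span P' y -> exists2 x, aff_span P x & f x = y),
        (forall x, aff_span P x -> (lattice_pt x <-> lattice_pt (f x)))
      & (forall x, aff_span P x -> (P x <-> P' (f x)))].

(* Contraction of a non-loop arrow a (Ha : a^- != a^+): delete a, glue a^-
   into a^+.  The vertices of the contracted quiver are the vertices other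
   than a^-; the glued vertex is represented by a^+. *)
Section Contract.
Variables (Q : quiver) (a : qA Q) (Ha : qs a != qt a).

Definition cV := {v : qV Q | v != qs a}.
Definition cA := {b : qA Q | b != a}.

Lemma ta_ne : qt a != qs a. Proof. by rewrite eq_sym. Qed.

Definition glue (v : qV Q) : cV :=
  if insub v is Some w then w else exist _ (qt a) ta_ne.

Definition contract : quiver :=
  @Quiver cV cA (fun b => glue (qs (val b))) (fun b => glue (qt (val b))).

Definition contract_weight (psi : qV Q -> int) (v : cV) : int :=
  psi (val v) + (if val v == qt a then psi (qs a) else 0).
End Contract.

Definition contractable (R : realType) (Q : quiver) (a : qA Q)
    (Ha : qs a != qt a) (psi : qV Q -> int) : Prop :=
  int_aff_equiv (@nabla R Q psi)
                (@nabla R (contract Ha) (@contract_weight Q a psi)).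

Definition shift_weight (Q : quiver) (theta : qV Q -> int) (a : qA Q) (d : int)
    (v : qV Q) : int :=
  theta v + d * ((v == qt a)%:R - (v == qs a)%:R).

(* The contracting map is the projection forgetting the coordinate of a.  On the
   affine span of nabla(Q, psi) the conservation law at a^+ recovers that
   coordinate as psi(a^+) minus an integer combination of the others, so the
   projection is injective there and preserves lattice points; it maps the
   polytope onto nabla(Q^, psi^) as soon as the recovered coordinate is
   nonnegative on nabla(Q^, psi^).  Shifting by d leaves psi^ unchanged and adds
   d to psi(a^+).  As Q^ is acyclic, weighting the conservation laws by a height
   function that increases along every arrow bounds the total flow on
   nabla(Q^, psi^) by a constant independent of d; hence large d suffices. *)

From mathcomp Require Import all_boot all_order all_algebra.
From mathcomp Require Import reals.
From mathcomp Require Import ring lra zify.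
Set Implicit Arguments. Unset Strict Implicit. Unset Printing Implicit Defensive.
Import Order.TTheory GRing.Theory Num.Theory.
Local Open Scope ring_scope.

Section Excess.
Variables (R : realType) (Q : quiver).

Definition incidence (v : qV Q) (b : qA Q) : R := (qt b == v)%:R - (qs b == v)%:R.

Definition excess (x : {ffun qA Q -> R}) (v : qV Q) : R :=
  \sum_b incidence v b * x b.

Lemma excessE (x : {ffun qA Q -> R}) v :
  \sum_(b | qt b == v) x b - \sum_(b | qs b == v) x b = excess x v.
Proof.
rewrite !(big_mkcond (fun b => _ == _)) -sumrB; apply: eq_bigr => b _.
by rewrite /incidence; case: (qt b == v); case: (qs b == v); rewrite /=; ring.
Qed.

Lemma nablaE (psi : qV Q -> int) (x : {ffun qA Q -> R}) :
  nabla psi x <-> (forall b, 0 <= x b) /\ (forall v, (psi v)%:~R = excess x v).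
Proof. by split=> -[x_ge0 x_cons]; split=> // v; rewrite x_cons excessE. Qed.

Lemma sum_weighted_excess (f : qV Q -> R) (x : {ffun qA Q -> R}) :
  \sum_v f v * excess x v = \sum_b (f (qt b) - f (qs b)) * x b.
Proof.
under eq_bigr do rewrite /excess mulr_sumr.
rewrite exchange_big /=; apply: eq_bigr => b _.
under eq_bigr do rewrite /incidence mulrA mulrBr mulrBl !mulr_natr.
rewrite sumrB mulrBl (bigD1 (qt b)) // [X in _ - X](bigD1 (qs b)) //= !eqxx !mulr1n.
by rewrite !big1 ?addr0 // => v /negbTE; rewrite eq_sym => ->; rewrite mulr0n mul0r.
Qed.

End Excess.

Arguments incidence {R Q} v b.

Lemma aff_span_linear_eq (R : realType) (A : finType) (S : {ffun A -> R} -> Prop)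
    (l : A -> R) (c : R) :
  (forall p, S p -> \sum_b l b * p b = c) ->
  forall x, aff_span S x -> \sum_b l b * x b = c.
Proof.
move=> Sl x [n [w [p [Sp [w_sum x_eq]]]]].
under eq_bigr do rewrite x_eq mulr_sumr.
rewrite exchange_big /= -[RHS]mul1r -w_sum mulr_suml; apply: eq_bigr => i _.
by rewrite -(Sl _ (Sp i)) mulr_sumr; apply: eq_bigr => b _; ring.
Qed.

Lemma aff_span_nabla_excess (R : realType) (Q : quiver) (psi : qV Q -> int) x :
  aff_span (@nabla R Q psi) x -> forall v, (psi v)%:~R = excess x v.
Proof.
move=> x_span v; symmetry; apply: aff_span_linear_eq x_span => p /nablaE[_ p_cons].
by rewrite p_cons.
Qed.

Section Height.
Variable Q : quiver.

Definition composable : rel (qA Q) := fun b c => qt b == qs c.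

Definition height (v : qV Q) : nat :=
  #|[set c | [exists b, (qt b == v) && connect composable c b]]|.

Lemma height_lt : acyclic Q -> forall b, (height (qs b) < height (qt b))%N.
Proof.
move=> Q_acyclic b; apply: proper_card; apply/properP; split.
  apply/subsetP => c; rewrite !inE => /existsP[b' /andP[/eqP b'b c_b']].
  apply/existsP; exists b; rewrite eqxx /=.
  by apply: connect_trans c_b' _; apply: connect1; rewrite /composable b'b.
exists b; rewrite !inE; first by apply/existsP; exists b; rewrite eqxx connect0.
apply/negP => /existsP[b' /andP[/eqP b'b /connectP[p p_path p_last]]].
by apply: Q_acyclic; exists b, p; rewrite p_path -p_last b'b eqxx.
Qed.

Lemma nabla_sum_le (R : realType) (w : qV Q -> int) (y : {ffun qA Q -> R}) :
  acyclic Q -> nabla w y -> \sum_b y b <= (\sum_v (height v)%:Z * w v)%:~R.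
Proof.
move=> Q_acyclic /nablaE[y_ge0 y_cons].
have -> : (\sum_v (height v)%:Z * w v)%:~R = \sum_v (height v)%:R * excess y v :> R.
  by rewrite rmorph_sum; apply: eq_bigr => v _; rewrite rmorphM /= y_cons.
rewrite sum_weighted_excess; apply: ler_sum => b _.
rewrite -natrB; last exact: ltnW (height_lt Q_acyclic b).
by rewrite -[leLHS]mul1r ler_wpM2r // ler1n subn_gt0 height_lt.
Qed.

End Height.

Section ContractArrow.
Variables (R : realType) (Q : quiver) (a : qA Q) (Ha : qs a != qt a).

Local Notation s := (qs a).
Local Notation t := (qt a).
Local Notation Qa := (contract Ha).

Lemma sum_arrowsE (G : qA Q -> R) : \sum_b G b = G a + \sum_(b : cA a) G (val b).
Proof.
rewrite (bigD1 a) //=; congr (_ + _).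
rewrite (reindex_omap (val : cA a -> qA Q) insub); last by move=> b ba; rewrite insubT.
by apply: eq_bigl => -[b ba] /=; rewrite insubT ?ba /= ?eqxx ?andbT.
Qed.

Lemma val_glue u : val (glue Ha u) = if u == s then t else u.
Proof.
rewrite /glue; case: insubP => [w w_s ->|]; first by rewrite (negbTE w_s).
by move/negbNE => ->.
Qed.

Lemma glue_indicator u (vh : cV a) :
  ((glue Ha u == vh)%:R : R) = (u == val vh)%:R + (val vh == t)%:R * (u == s)%:R.
Proof.
have /negbTE vh_s := valP vh.
rewrite -val_eqE val_glue; case: (u =P s) => [->|_]; last by rewrite mulr0 addr0.
by rewrite (eq_sym s) vh_s add0r mulr1 eq_sym.
Qed.

Definition restrict (x : {ffun qA Q -> R}) : {ffun cA a -> R} := [ffun b => x (val b)].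

(* The conservation law of the contracted quiver at the glued vertex is the sum
   of the laws at a^- and a^+, in which the flow through a cancels. *)
Lemma excess_restrict (x : {ffun qA Q -> R}) (vh : cV a) :
  excess (Q := Qa) (restrict x) vh = excess x (val vh) + (val vh == t)%:R * excess x s.
Proof.
have /negbTE vh_s := valP vh.
rewrite /excess mulr_sumr -big_split /= sum_arrowsE /incidence eqxx.
rewrite (eq_sym t s) (negbTE Ha) (eq_sym s) vh_s /=.
rewrite [X in _ = X + _](_ : _ = 0); last by rewrite [t == _]eq_sym; case: (_ == _); ring.
by rewrite add0r; apply: eq_bigr => b _; rewrite /= !glue_indicator ffunE; ring.
Qed.

Lemma excess_tE (x : {ffun qA Q -> R}) :
  excess x t = x a + \sum_(b : cA a) incidence t (val b) * x (val b).
Proof. by rewrite /excess sum_arrowsE /incidence eqxx (negbTE Ha) subr0 mul1r. Qed.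

Variable psi : qV Q -> int.

Local Notation conserves psi x := (forall v, (psi v)%:~R = excess x v).

(* The flow through a forced by the conservation law at a^+. *)
Definition flow_on_a (y : {ffun cA a -> R}) : R :=
  (psi t)%:~R - \sum_(b : cA a) incidence t (val b) * y b.

Definition extend (y : {ffun cA a -> R}) : {ffun qA Q -> R} :=
  [ffun b => if insub b is Some b' then y b' else flow_on_a y].

Lemma extend_a y : extend y a = flow_on_a y.
Proof. by rewrite ffunE insubF // eqxx. Qed.

Lemma extend_val y b : extend y (val b) = y b.
Proof. by rewrite ffunE valK. Qed.

Lemma restrict_extend y : restrict (extend y) = y.
Proof. by apply/ffunP => b; rewrite ffunE extend_val. Qed.

Lemma flow_on_a_restrict (x : {ffun qA Q -> R}) :
  conserves psi x -> x a = flow_on_a (restrict x).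
Proof.
move=> x_cons; rewrite /flow_on_a x_cons excess_tE.
under [X in _ = _ - X]eq_bigr do rewrite ffunE.
ring.
Qed.

Lemma restrict_conserves (x : {ffun qA Q -> R}) :
  conserves psi x ->
  forall vh, (contract_weight psi vh)%:~R = excess (Q := Qa) (restrict x) vh.
Proof.
move=> x_cons vh; rewrite excess_restrict -!x_cons /contract_weight.
by case: (val vh == t); rewrite ?rmorphD ?mul1r ?mul0r ?addr0.
Qed.

Lemma extend_conserves y :
  (forall vh, (contract_weight psi vh)%:~R = excess (Q := Qa) y vh) ->
  conserves psi (extend y).
Proof.
move=> y_cons.
have ext_cons (vh : cV a) : (contract_weight psi vh)%:~R
    = excess (extend y) (val vh) + (val vh == t)%:R * excess (extend y) s.
  by rewrite -excess_restrict restrict_extend y_cons.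
have cons_t : (psi t)%:~R = excess (extend y) t.
  rewrite excess_tE extend_a /flow_on_a.
  under [X in _ = _ + X]eq_bigr do rewrite extend_val.
  ring.
move=> v; case: (v =P s) => [->|/eqP v_s].
  have := ext_cons (exist _ t (ta_ne Ha)).
  by rewrite /contract_weight /= eqxx -cons_t mul1r rmorphD => /addrI.
have := ext_cons (exist _ v v_s); rewrite /contract_weight /=.
by case: (v =P t) => [->|_] //; rewrite addr0 mul0r addr0.
Qed.

Lemma flow_on_a_ge (y : {ffun cA a -> R}) :
  (forall b, 0 <= y b) -> (psi t)%:~R - \sum_b y b <= flow_on_a y.
Proof.
move=> y_ge0; rewrite lerD2l lerN2; apply: ler_sum => b _.
rewrite -[leRHS]mul1r ler_wpM2r // /incidence.
by case: (_ == _); case: (_ == _); rewrite /=; lra.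
Qed.

Local Notation PQ := (@nabla R Q psi).
Local Notation Pa := (@nabla R Qa (contract_weight psi)).

Lemma aff_span_restrict x : aff_span PQ x -> aff_span Pa (restrict x).
Proof.
move=> [n [w [p [Pp [w_sum x_eq]]]]].
exists n, w, (fun i => restrict (p i)); split; last first.
  by split=> // b; rewrite ffunE x_eq; apply: eq_bigr => i _; rewrite ffunE.
move=> i; have /nablaE[p_ge0 p_cons] := Pp i.
by apply/nablaE; split; [move=> b; rewrite ffunE | exact: restrict_conserves].
Qed.

Lemma restrict_inj_aff_span x1 x2 :
  aff_span PQ x1 -> aff_span PQ x2 -> restrict x1 = restrict x2 -> x1 = x2.
Proof.
move=> /aff_span_nabla_excess x1_cons /aff_span_nabla_excess x2_cons x12.
apply/ffunP => b; case: (b =P a) => [->|/eqP b_a].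
  by rewrite (flow_on_a_restrict x1_cons) (flow_on_a_restrict x2_cons) x12.
by have := congr1 (fun y : {ffun cA a -> R} => y (Sub b b_a)) x12; rewrite !ffunE.
Qed.

Lemma lattice_pt_restrict x :
  aff_span PQ x -> lattice_pt x <-> lattice_pt (restrict x).
Proof.
move=> /aff_span_nabla_excess x_cons; split=> x_int b; first by rewrite ffunE.
case: (b =P a) => [->|/eqP b_a]; last by have := x_int (Sub b b_a); rewrite ffunE.
rewrite (flow_on_a_restrict x_cons) rpredB ?intr_int // rpred_sum // => b' _.
by rewrite rpredM ?rpredB ?natr_int.
Qed.

Hypothesis flow_on_a_ge0 : forall y, Pa y -> 0 <= flow_on_a y.

Lemma nabla_extend y : Pa y -> PQ (extend y).
Proof.
move=> Pa_y; have /nablaE[y_ge0 y_cons] := Pa_y.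
apply/nablaE; split; last exact: extend_conserves.
by move=> b; rewrite ffunE; case: insub => [b'|] //; apply: flow_on_a_ge0.
Qed.

Lemma aff_span_restrict_onto y :
  aff_span Pa y -> exists2 x, aff_span PQ x & restrict x = y.
Proof.
move=> [n [w [p [Pp [w_sum y_eq]]]]].
exists [ffun b => \sum_i w i * extend (p i) b].
  exists n, w, (fun i => extend (p i)); split=> [i|]; first exact: nabla_extend.
  by split=> // b; rewrite ffunE.
by apply/ffunP => b; rewrite !ffunE y_eq; apply: eq_bigr => i _; rewrite extend_val.
Qed.

Lemma nabla_restrict x : aff_span PQ x -> PQ x <-> Pa (restrict x).
Proof.
move=> /aff_span_nabla_excess x_cons; split.
  move=> /nablaE[x_ge0 _]; apply/nablaE; split; last exact: restrict_conserves.
  by move=> b; rewrite ffunE.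
move=> Pa_x; have /nablaE[x_ge0 _] := Pa_x; apply/nablaE; split=> // b.
case: (b =P a) => [->|/eqP b_a].
  by rewrite (flow_on_a_restrict x_cons) flow_on_a_ge0.
by have := x_ge0 (Sub b b_a); rewrite ffunE.
Qed.

Lemma contractable_of_flow_on_a_ge0 : contractable R Ha psi.
Proof.
exists restrict; split.
  exists restrict, [ffun _ => 0]; split=> [k x1 x2|x b]; last by rewrite !ffunE addr0.
  by apply/ffunP => b; rewrite !ffunE.
split.
- exact: aff_span_restrict.
- exact: restrict_inj_aff_span.
- exact: aff_span_restrict_onto.
- exact: lattice_pt_restrict.
- exact: nabla_restrict.
Qed.

End ContractArrow.

Lemma contract_weight_shift (Q : quiver) (theta : qV Q -> int) (a : qA Q)
    (Ha : qs a != qt a) (d : int) (v : cV a) :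
  contract_weight (shift_weight theta a d) v = contract_weight theta v.
Proof.
have /negbTE v_s := valP v.
rewrite /contract_weight /shift_weight v_s eqxx (negbTE Ha) /=.
by case: (val v == qt a); rewrite /=; ring.
Qed.

Lemma shift_weight_t (Q : quiver) (theta : qV Q -> int) (a : qA Q)
    (Ha : qs a != qt a) (d : int) :
  shift_weight theta a d (qt a) = theta (qt a) + d.
Proof. by rewrite /shift_weight eqxx eq_sym (negbTE Ha) subr0 mulr1. Qed.

Theorem proposition4p21 (R : realType) (Q : quiver) (theta : qV Q -> int)
  (a : qA Q) (Ha : qs a != qt a) :
  acyclic Q ->
  (exists x, @nabla R Q theta x) ->
  acyclic (contract Ha) ->
  exists d0 : int, forall d : int, d0 <= d ->
    @contractable R Q a Ha (shift_weight theta a d).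
Proof.
move=> _ _ Qa_acyclic.
pose M := \sum_(v : cV a) (height (Q := contract Ha) v)%:Z * contract_weight theta v.
exists (M - theta (qt a)) => d le_d; apply: contractable_of_flow_on_a_ge0 => y Pa_y.
have sum_y_le : \sum_b y b <= M%:~R.
  have -> : M = \sum_(v : cV a) (height (Q := contract Ha) v)%:Z
                 * contract_weight (shift_weight theta a d) v.
    by apply: eq_bigr => v _; rewrite contract_weight_shift.
  exact: nabla_sum_le Qa_acyclic Pa_y.
have [y_ge0 _] := Pa_y.
apply: le_trans _ (flow_on_a_ge (shift_weight theta a d) y_ge0).
rewrite (shift_weight_t _ Ha) subr_ge0.
by apply: le_trans sum_y_le _; rewrite ler_int; lia.
Qed.
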